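(* Let $q\ge5$ be odd with $q\equiv\xi\pmod3$. (i) If $\xi=-1$, then $V_2=1$ and $V_1=(q-1)/2$. (ii) If $\xi=1$ and $2$ is a non-cube in $\mathbb F_q$, then $V_2=0$ and $V_1=\mathcal N_q$. (iii) If $\xi=1$ and $2$ is a cube in $\mathbb F_q$, then $V_2=3$ and $V_1=\mathcal N_q$.
   Context: For $m\in\{0,1,2,3\}$, $V_m$ is the number of $\beta\in\mathbb F_q$ such that the cubic equation $t^3-3\beta t^2-1=0$ has exactly $m$ distinct solutions $t\in\mathbb F_q$. $\mathcal N_q=\#\{\beta\in\mathbb F_q: 1+4\beta^3\text{ is a non-square in }\mathbb F_q\}$. *)

From mathcomp Require Import all_boot all_order all_algebra all_field.
Set Implicit Arguments. Unset Strict Implicit. Unset Printing Implicit Defensive.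
Import GRing.Theory.
Local Open Scope ring_scope.

Definition nsol (F : finFieldType) (beta : F) : nat :=
  #|[set t : F | t ^+ 3 - 3%:R * beta * t ^+ 2 - 1 == 0]|.

Definition Vcount (F : finFieldType) (m : nat) : nat :=
  #|[set beta : F | nsol beta == m]|.

Definition is_square (F : finFieldType) (x : F) : bool := [exists y : F, y ^+ 2 == x].
Definition is_cube (F : finFieldType) (x : F) : bool := [exists y : F, y ^+ 3 == x].

Definition Ncount (F : finFieldType) : nat :=
  #|[set beta : F | ~~ is_square (1 + 4%:R * beta ^+ 3)]|.

(* A root t of t^3 - 3 b t^2 - 1 is nonzero and determines b = (t^3 - 1) / (3 t^2).
   Dividing out x - t leaves the quadratic (2 t^2 x + 1)^2 = 1 - 4 t^3, so the cubic has
   a single root exactly when 1 - 4 t^3 is a non-square, and a repeated root exactly when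
   1 + 4 b^3 = 0, since 27 t^6 (1 + 4 b^3) = - (t^3 + 2)^2 (1 - 4 t^3).  Hence V_1 = N_q,
   through t |-> b (injective on such t, which are then the only root) and t |-> -t,
   while V_2 counts the solutions of (-2 b)^3 = 2: one when cubing is bijective
   (q = 2 mod 3), otherwise three or none according as 2 is a cube or not.  When
   q = 2 mod 3, b |-> 1 + 4 b^3 is also bijective, so N_q is the number (q - 1) / 2 of
   non-squares. *)

From mathcomp Require Import all_boot all_algebra all_field all_fingroup all_solvable.
From mathcomp Require Import ring zify.
Set Implicit Arguments. Unset Strict Implicit. Unset Printing Implicit Defensive.
Import GRing.Theory.
Local Open Scope ring_scope.

Lemma pchar_dvd_card (F : finFieldType) p : p \in [pchar F] -> (p %| #|F|)%N.
Proof.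
move=> pF; have := order_dvdG (in_setT (1 : pPrimeCharType pF)).
by rewrite order_pprimeChar ?oner_neq0 // cardsT.
Qed.

Lemma natf_neq0_finField (F : finFieldType) p :
  prime p -> ~~ (p %| #|F|)%N -> p%:R != 0 :> F.
Proof.
move=> p_pr; apply: contraNN => p0; apply: pchar_dvd_card.
by rewrite inE p_pr p0.
Qed.

Lemma finField_unity_root (F : finFieldType) (x : F) : x != 0 -> x ^+ #|F|.-1 = 1.
Proof.
move=> x0; apply: (mulIf x0).
by rewrite mul1r -exprSr prednK ?expf_card // ltnW ?finNzRing_gt1.
Qed.

Lemma finField_pred_card_gt0 (F : finFieldType) : (0 < #|F|.-1)%N.
Proof. by rewrite -subn1 subn_gt0 finNzRing_gt1. Qed.

Lemma finField_prim_root_exists (F : finFieldType) n :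
  (n %| #|F|.-1)%N -> exists w : F, n.-primitive_root w.
Proof.
move=> n_dvd; have [||g _ prim_g] := hasP (@has_prim_root F #|F|.-1 (enum [set~ 0])
  (finField_pred_card_gt0 F) _ (enum_uniq _) _).
- by apply/allP => x; rewrite mem_enum !inE => x0; rewrite unity_rootE finField_unity_root.
- by rewrite -cardE cardsC1.
by exists (g ^+ (#|F|.-1 %/ n)); exact: dvdn_prim_root.
Qed.

Lemma expf_coprime_inj (F : finFieldType) n :
  (0 < n)%N -> coprime n #|F|.-1 -> injective (fun x : F => x ^+ n).
Proof.
move=> n_gt0 co_n x y /= xy.
have pow_eq0 (u : F) : (u ^+ n == 0) = (u == 0) by rewrite expf_eq0 n_gt0.
have [y0 | y0] := eqVneq y 0.
  by move: xy; rewrite y0 expr0n gtn_eqF // => /eqP; rewrite pow_eq0 => /eqP.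
have x0 : x != 0 by rewrite -pow_eq0 xy pow_eq0.
(* Bezout: [#|F|.-1] divides [1 + a * n], hence [x / y = (x / y) ^+ (1 + a * n) = 1]. *)
rewrite coprime_sym in co_n.
have [a _] := Bezoutl n (finField_pred_card_gt0 F); rewrite (eqP co_n).
have z0 : x / y != 0 by rewrite mulf_neq0 ?invr_eq0.
move=> /(expr_dvd (finField_unity_root z0)).
rewrite exprD expr1 mulnC exprM exprMn xy exprVn divff ?expf_neq0 // expr1n mulr1.
by move/(canRL (divfK y0)); rewrite mul1r.
Qed.

Lemma card_expf_eq_coprime (F : finFieldType) n (a : F) :
  (0 < n)%N -> coprime n #|F|.-1 -> #|[set x : F | x ^+ n == a]| = 1%N.
Proof.
move=> n_gt0 co_n.
rewrite -(cards1 a) -(card_preimset [set a] (expf_coprime_inj n_gt0 co_n)).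
by apply: eq_card => x; rewrite !inE.
Qed.

Lemma card_expf_eq_prim (F : finFieldType) n (w c : F) :
  n.-primitive_root w -> c != 0 -> #|[set x : F | x ^+ n == c ^+ n]| = n.
Proof.
move=> prim_w c0.
have -> : [set x : F | x ^+ n == c ^+ n] = [set c * w ^+ i | i : 'I_n].
  apply/setP => x; rewrite inE; apply/eqP/imsetP => [xn | [i _ ->]].
    have /(prim_rootP prim_w)[i xcE] : (x / c) ^+ n = 1.
      by rewrite exprMn xn exprVn divff // expf_neq0.
    by exists i => //; rewrite -xcE mulrC divfK.
  by rewrite exprMn exprAC (prim_expr_order prim_w) expr1n mulr1.
rewrite card_imset ?card_ord // => i j /(mulfI c0)/eqP.
by rewrite (eq_prim_root_expr prim_w) !modn_small // => /eqP /val_inj.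
Qed.

Section Squares.

Variable F : finFieldType.
Hypothesis two_neq0 : (2%:R : F) != 0.

Lemma is_square_sqr (x : F) : is_square (x ^+ 2).
Proof. by apply/existsP; exists x. Qed.

Lemma is_square0 : is_square (0 : F).
Proof. by rewrite -(mul0r 0) -expr2 is_square_sqr. Qed.

Lemma card_sqrt (D : F) : #|[set y : F | y ^+ 2 == D]| =
  if is_square D then (if D == 0 then 1%N else 2%N) else 0%N.
Proof.
case: ifP => [/existsP[d /eqP <-] | nsqD].
  have -> : [set y : F | y ^+ 2 == d ^+ 2] = [set d; - d].
    by apply/setP => y; rewrite !inE eqf_sqr.
  rewrite cards2 sqrf_eq0; have [-> | d0] := eqVneq d 0; first by rewrite oppr0 eqxx.
  suff -> : d != - d by [].
  by rewrite -addr_eq0 -mulr2n -mulr_natl mulf_neq0.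
apply/eqP; rewrite cards_eq0; apply/eqP/setP => y; rewrite !inE.
by apply: contraFF nsqD => y2D; apply/existsP; exists y.
Qed.

Lemma card_nonsquare : #|[set w : F | ~~ is_square w]| = ((#|F| - 1) %/ 2)%N.
Proof.
pose S := [set w : F | is_square w & w != 0].
have card_F : #|F| = (1 + 2 * #|S|)%N.
  transitivity (\sum_(w : F) #|[set y : F | y ^+ 2 == w]|)%N.
    rewrite -sum1_card (partition_big (fun y : F => y ^+ 2) predT) //=.
    by apply: eq_bigr => w _; rewrite -sum1_card; apply: eq_bigl => y; rewrite inE.
  rewrite (bigD1 0) //= card_sqrt is_square0 eqxx; congr (_ + _)%N.
  rewrite mulnC -sum_nat_const big_mkcond [RHS]big_mkcond; apply: eq_bigr => w _.
  by rewrite inE card_sqrt; case: (is_square w); case: (w == 0).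
have partition_F : (#|S| + #|[set w : F | ~~ is_square w]| = #|F|.-1)%N.
  rewrite -(cardsC1 (0 : F)) -(cardsID [set w | is_square w] [set~ 0]).
  congr (_ + _)%N; apply: eq_card => w; rewrite !inE; first by rewrite andbC.
  by have [-> | _] := eqVneq w 0; rewrite ?is_square0 //= andbT.
lia.
Qed.

End Squares.

Section Cubic.

Variable F : finFieldType.
Hypotheses (two_neq0 : (2%:R : F) != 0) (three_neq0 : (3%:R : F) != 0).

Let four_neq0 : (4%:R : F) != 0.
Proof. by rewrite (natrM _ 2 2) mulf_neq0. Qed.

Definition cubic_roots (b : F) := [set t : F | t ^+ 3 - 3%:R * b * t ^+ 2 - 1 == 0].

Definition cubic_param (t : F) := (t ^+ 3 - 1) / (3%:R * t ^+ 2).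

Lemma mem_cubic_roots b t : (t \in cubic_roots b) = (t != 0) && (b == cubic_param t).
Proof.
rewrite inE; have [-> | t0] := eqVneq t 0.
  by rewrite !expr0n /= mulr0 !subr0 sub0r oppr_eq0 oner_eq0.
have nz : 3%:R * t ^+ 2 != 0 by rewrite mulf_neq0 ?expf_neq0.
have -> : t ^+ 3 - 3%:R * b * t ^+ 2 - 1 = 3%:R * t ^+ 2 * (cubic_param t - b).
  by rewrite /cubic_param; field; rewrite t0 three_neq0.
by rewrite mulf_eq0 (negPf nz) subr_eq0 eq_sym.
Qed.

Lemma cubic_roots_param t : t != 0 ->
  cubic_roots (cubic_param t) =
    t |: [set x | (2%:R * t ^+ 2 * x + 1) ^+ 2 == 1 - 4%:R * t ^+ 3].
Proof.
move=> t0; apply/setP => x; rewrite !inE.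
have nz : 4%:R * t ^+ 4 != 0 by rewrite mulf_neq0 ?expf_neq0.
rewrite -(mulrI_eq0 _ (mulfI nz)).
have -> : 4%:R * t ^+ 4 * (x ^+ 3 - 3%:R * cubic_param t * x ^+ 2 - 1) =
    (x - t) * ((2%:R * t ^+ 2 * x + 1) ^+ 2 - (1 - 4%:R * t ^+ 3)).
  by rewrite /cubic_param; field; rewrite t0 three_neq0.
by rewrite mulf_eq0 !subr_eq0.
Qed.

Lemma nsol_param t : t != 0 ->
  nsol (cubic_param t) =
    ((t ^+ 3 + 2%:R != 0)%R + #|[set y : F | (y ^+ 2 == 1 - 4%:R * t ^+ 3)%R]|)%N.
Proof.
move=> t0; change (nsol _) with #|cubic_roots (cubic_param t)|.
rewrite cubic_roots_param // cardsU1; congr (_ + _)%N.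
  rewrite inE -subr_eq0.
  have -> : (2%:R * t ^+ 2 * t + 1) ^+ 2 - (1 - 4%:R * t ^+ 3) =
      4%:R * t ^+ 3 * (t ^+ 3 + 2%:R) by ring.
  by rewrite mulf_eq0 negb_or mulf_neq0 ?expf_neq0.
have affine_inj : injective (fun x : F => 2%:R * t ^+ 2 * x + 1).
  by move=> x y /addIr /(mulfI (mulf_neq0 two_neq0 (expf_neq0 2 t0))).
by rewrite -[RHS](card_preimset _ affine_inj); apply: eq_card => x; rewrite !inE.
Qed.

Lemma disc_cubic_param t : t != 0 ->
  27%:R * t ^+ 6 * (1 + 4%:R * cubic_param t ^+ 3) =
    - ((t ^+ 3 + 2%:R) ^+ 2 * (1 - 4%:R * t ^+ 3)).
Proof. by move=> t0; rewrite /cubic_param; field; rewrite t0 three_neq0. Qed.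

Let disc_param_sqr (t : F) : t ^+ 3 + 2%:R = 0 -> 1 - 4%:R * t ^+ 3 = 3%:R ^+ 2.
Proof.
move=> u2; have -> : t ^+ 3 = - 2%:R by apply/eqP; rewrite -addr_eq0 u2.
ring.
Qed.

Lemma nsol_param_eq1 t : t != 0 ->
  (nsol (cubic_param t) == 1%N) = ~~ is_square (1 - 4%:R * t ^+ 3).
Proof.
move=> t0; rewrite nsol_param // card_sqrt //.
have [/disc_param_sqr -> | _] := eqVneq (t ^+ 3 + 2%:R) 0.
  by rewrite is_square_sqr sqrf_eq0 (negPf three_neq0).
by case: is_square => //; case: ifP.
Qed.

Lemma nsol_param_eq2 t : t != 0 ->
  (nsol (cubic_param t) == 2%N) = (1 + 4%:R * cubic_param t ^+ 3 == 0).
Proof.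
move=> t0; rewrite nsol_param // card_sqrt //.
have nz : 27%:R * t ^+ 6 != 0 :> F.
  by rewrite mulf_neq0 ?expf_neq0 // (natrM _ 3 9) (natrM _ 3 3) !mulf_neq0.
rewrite -[1 + _ == 0](mulrI_eq0 _ (mulfI nz)) disc_cubic_param //.
rewrite oppr_eq0 mulf_eq0 sqrf_eq0.
have [/disc_param_sqr -> | _] := eqVneq (t ^+ 3 + 2%:R) 0.
  by rewrite is_square_sqr sqrf_eq0 (negPf three_neq0).
have [-> | _] := eqVneq (1 - 4%:R * t ^+ 3) 0; last by case: is_square.
by rewrite is_square0.
Qed.

Lemma nsol_eq2 (b : F) : (nsol b == 2%N) = (1 + 4%:R * b ^+ 3 == 0).
Proof.
have [no_root | [t]] := set_0Vmem (cubic_roots b).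
  change (nsol b) with #|cubic_roots b|; rewrite no_root cards0.
  apply/esym/negbTE; apply: contra_eqN no_root => /eqP disc0.
  apply/set0Pn; exists (2%:R * b); rewrite inE; apply/eqP.
  transitivity (- (1 + 4%:R * b ^+ 3)); first by ring.
  by rewrite disc0 oppr0.
by rewrite mem_cubic_roots => /andP[t0 /eqP ->]; exact: nsol_param_eq2.
Qed.

Lemma card_nsol_eq2 : Vcount F 2 = #|[set x : F | x ^+ 3 == 2%:R]|.
Proof.
have scale_inj : injective (fun b : F => - (2%:R * b)).
  by move=> x y /oppr_inj /(mulfI two_neq0).
rewrite -[RHS](card_preimset _ scale_inj); apply: eq_card => b.
rewrite !inE nsol_eq2 -[in RHS]subr_eq0.
have -> : (- (2%:R * b)) ^+ 3 - 2%:R = - 2%:R * (1 + 4%:R * b ^+ 3) :> F by ring.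
by rewrite mulf_eq0 oppr_eq0 (negPf two_neq0).
Qed.

Lemma card_nsol_eq1 : Vcount F 1 = Ncount F.
Proof.
pose A := [set t : F | ~~ is_square (1 - 4%:R * t ^+ 3)].
have A_neq0 t : t \in A -> t != 0.
  rewrite inE; apply: contraNneq => ->.
  by rewrite expr0n mulr0 subr0 -(expr1n _ 2) is_square_sqr.
have nsol1E : [set b | nsol b == 1%N] = cubic_param @: A.
  apply/setP => b; rewrite inE; apply/idP/imsetP => [/cards1P[t rootsE] | [t tA ->]].
    have := set11 t; rewrite -rootsE mem_cubic_roots => /andP[t0 /eqP bE].
    by exists t; rewrite // inE -nsol_param_eq1 // -bE; apply/cards1P; exists t.
  by rewrite nsol_param_eq1 ?A_neq0 //; rewrite inE in tA.
have param_inj : {in A &, injective cubic_param}.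
  move=> t1 t2 /[dup] /A_neq0 t10 t1A /A_neq0 t20 eq12.
  have /cards1P[x rootsE] : nsol (cubic_param t1) == 1%N.
    by rewrite nsol_param_eq1 //; rewrite inE in t1A.
  have root_x t : t != 0 -> cubic_param t1 = cubic_param t -> t = x.
    move=> t0 eq_t; apply/set1P; rewrite -rootsE.
    by rewrite mem_cubic_roots t0 eq_t eqxx.
  by rewrite (root_x t1) // (root_x t2).
rewrite /Vcount nsol1E (card_in_imset param_inj) /Ncount.
rewrite -(card_preimset _ (@oppr_inj F)); apply: eq_card => t; rewrite !inE.
by have -> : 1 - 4%:R * (- t) ^+ 3 = 1 + 4%:R * t ^+ 3 :> F by ring.
Qed.

Lemma Ncount_coprime3 : coprime 3 #|F|.-1 -> Ncount F = ((#|F| - 1) %/ 2)%N.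
Proof.
move=> co3; have cube_inj := expf_coprime_inj (isT : (0 < 3)%N) co3.
have disc_inj : injective (fun b : F => 1 + 4%:R * b ^+ 3).
  by move=> x y /addrI /(mulfI four_neq0) /cube_inj.
rewrite -card_nonsquare // -[RHS](card_preimset _ disc_inj).
by apply: eq_card => b; rewrite !inE.
Qed.

End Cubic.

Theorem lemma4p4 (F : finFieldType) (q : nat) (hq : #|F| = q)
  (hodd : odd q) (h5 : (5 <= q)%N) :
  ((q %% 3 = 2)%N -> Vcount F 2 = 1%N /\ Vcount F 1 = ((q - 1) %/ 2)%N) /\
  ((q %% 3 = 1)%N -> ~~ is_cube (2%:R : F) -> Vcount F 2 = 0%N /\ Vcount F 1 = Ncount F) /\
  ((q %% 3 = 1)%N -> is_cube (2%:R : F) -> Vcount F 2 = 3%N /\ Vcount F 1 = Ncount F).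
Proof.
subst q.
have two_neq0 : (2%:R : F) != 0 by rewrite natf_neq0_finField // dvdn2 hodd.
have three_neq0 r : (#|F| %% 3 = r.+1)%N -> (3%:R : F) != 0.
  by move=> qr; rewrite natf_neq0_finField // /dvdn qr.
split; [|split] => [q2 | q1 not_cube | q1 /existsP[c /eqP c3]].
- have co3 : coprime 3 #|F|.-1.
    by rewrite prime_coprime // /dvdn; have := finNzRing_gt1 F; lia.
  rewrite card_nsol_eq2 ?card_expf_eq_coprime ?(three_neq0 _ q2) //.
  by rewrite card_nsol_eq1 ?(three_neq0 _ q2) ?Ncount_coprime3.
- rewrite card_nsol_eq2 ?card_nsol_eq1 ?(three_neq0 _ q1) //; split=> //.
  apply/eqP; rewrite cards_eq0; apply: contraNT not_cube => /set0Pn[x].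
  by rewrite inE => x3; apply/existsP; exists x.
- have [w prim_w] : exists w : F, 3.-primitive_root w.
    by apply: finField_prim_root_exists; rewrite /dvdn; have := finNzRing_gt1 F; lia.
  have c0 : c != 0 by apply: contra_neq two_neq0 => c0; rewrite -c3 c0 expr0n.
  rewrite card_nsol_eq2 ?card_nsol_eq1 ?(three_neq0 _ q1) // -c3.
  by rewrite (card_expf_eq_prim prim_w c0).
Qed.
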